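(* Let $(M,d,0_M)$ be an unbounded pointed metric space, $(N,d,0_N)$ any pointed metric space and $f\colon M\to N$ any map. Suppose $f$ satisfies: $(P_3)$ for every sequence $(x_n,y_n)_n$ in $M\times M$ with $x_n\ne y_n$ and $\lim_n d(x_n,0_M)=\lim_n d(y_n,0_M)=\infty$, either $(f(x_n),f(y_n))_n$ has an accumulation point in $N\times N$, or $\liminf_{n\to\infty}\frac{d(f(x_n),f(y_n))}{d(x_n,y_n)}=0$. Then $f$ is radially flat, i.e. $$\lim_{d(x,0_M)\to\infty}\frac{d(f(x),0_N)}{d(x,0_M)}=0.$$ *)

From Stdlib Require Import Reals.
From Coquelicot Require Import Coquelicot.
Open Scope R_scope.

Definition unbounded (M : Metric_Space) (o : Base M) : Prop :=
  forall r : R, exists x : Base M, dist M x o > r.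

(* (a,b) is an accumulation (cluster) point of the sequence (u_n, v_n)_n in
   N x N (product topology, i.e. max-metric): every neighbourhood is visited
   infinitely often. *)
Definition is_accumulation_point2 (N : Metric_Space)
  (u v : nat -> Base N) (a b : Base N) : Prop :=
  forall eps : R, eps > 0 -> forall n0 : nat, exists n : nat,
    (n0 <= n)%nat /\ dist N (u n) a < eps /\ dist N (v n) b < eps.

Definition has_accumulation_point2 (N : Metric_Space)
  (u v : nat -> Base N) : Prop :=
  exists a b : Base N, is_accumulation_point2 N u v a b.

Definition P3 (M N : Metric_Space) (oM : Base M) (oN : Base N)
  (f : Base M -> Base N) : Prop :=
  forall x y : nat -> Base M,
    (forall n, x n <> y n) ->
    is_lim_seq (fun n => dist M (x n) oM) p_infty ->
    is_lim_seq (fun n => dist M (y n) oM) p_infty ->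
    has_accumulation_point2 N (fun n => f (x n)) (fun n => f (y n))
    \/ LimInf_seq (fun n => dist N (f (x n)) (f (y n)) / dist M (x n) (y n))
         = Finite 0.

Definition radially_flat (M N : Metric_Space) (oM : Base M) (oN : Base N)
  (f : Base M -> Base N) : Prop :=
  forall eps : R, eps > 0 -> exists r : R, forall x : Base M,
    dist M x oM > r -> Rabs (dist N (f x) oN / dist M x oM) < eps.

(* Suppose f is not radially flat: there are e > 0 and points x arbitrarily
   far from 0_M with d(f x, 0_N) >= e d(x, 0_M).  Choose such points s_0,
   s_1, ... so fast escaping that d(s_(k+1), 0_M) dominates
   (k+2) (d(s_k, 0_M) + d(f s_k, 0_N)).  For the pairs (s_(k+1), s_k) the
   images f(s_(k+1)) run off to infinity, so there is no accumulation point,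
   while the difference quotients stay above e/2 eventually, so their liminf
   is not 0.  This contradicts (P3). *)

From Stdlib Require Import Reals.
From Coquelicot Require Import Coquelicot.
From Stdlib Require Import Classical ClassicalEpsilon Lra Lia.
Open Scope R_scope.

Lemma dist_neq (M : Metric_Space) (o x y : Base M) :
  dist M y o < dist M x o -> x <> y.
Proof. intros Hlt ->; lra. Qed.

Lemma no_accumulation_point2_of_diverging (N : Metric_Space) (oN : Base N)
  (u v : nat -> Base N) :
  is_lim_seq (fun n => dist N (u n) oN) p_infty ->
  ~ has_accumulation_point2 N u v.
Proof.
  intros Hu [a [b Hab]].
  apply is_lim_seq_spec in Hu.
  destruct (Hu (dist N a oN + 1)) as [n0 Hfar].
  destruct (Hab 1 Rlt_0_1 n0) as [n [Hn [Hua _]]].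
  pose proof (Hfar n Hn).
  pose proof (dist_tri N (u n) oN a).
  rewrite (dist_sym N a oN) in *.
  lra.
Qed.

Lemma LimInf_seq_neq_0_of_eventually_ge (w : nat -> R) (c : R) :
  0 < c -> eventually (fun n => c <= w n) -> LimInf_seq w <> Finite 0.
Proof.
  intros Hc Hev Hw.
  pose proof (LimInf_le _ _ Hev) as Hle.
  rewrite LimInf_seq_const, Hw in Hle; simpl in Hle.
  lra.
Qed.

Lemma is_lim_seq_p_infty_of_scal_le (u v : nat -> R) (e : R) :
  0 < e -> (forall n, e * u n <= v n) ->
  is_lim_seq u p_infty -> is_lim_seq v p_infty.
Proof.
  intros He Huv Hu.
  apply is_lim_seq_le_p_loc with (u := fun n => e * u n).
  - exists O; intros n _; trivial.
  - apply is_lim_seq_spec in Hu; apply is_lim_seq_spec.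
    intro B; destruct (Hu (B / e)) as [n0 Hn0].
    exists n0; intros n Hn.
    pose proof (Hn0 n Hn) as Hlt.
    apply Rmult_lt_reg_r with (/ e); [apply Rinv_0_lt_compat; exact He|].
    replace (e * u n * / e) with (u n) by (field; lra).
    exact Hlt.
Qed.

(* d(f x, f y) >= e d(x, 0_M) - d(f y, 0_N) and d(x, y) <= d(x, 0_M) + d(y, 0_M);
   the lower bound on K makes the former at least e/2 times the latter. *)
Lemma dist_quotient_ge (M N : Metric_Space) (oM : Base M) (oN : Base N)
  (f : Base M -> Base N) (e K : R) (x y : Base M) :
  0 < e -> 2 / e + 1 <= K ->
  e * dist M x oM <= dist N (f x) oN ->
  K * (dist M y oM + dist N (f y) oN) < dist M x oM ->
  e / 2 <= dist N (f x) (f y) / dist M x y.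
Proof.
  intros He HK Hfx Hxy.
  set (X := dist M x oM) in *; set (a := dist M y oM) in *.
  set (b := dist N (f y) oN) in *; set (FX := dist N (f x) oN) in *.
  set (D := dist N (f x) (f y)); set (d := dist M x y).
  assert (Ha : 0 <= a) by apply Rge_le, dist_pos.
  assert (Hb : 0 <= b) by apply Rge_le, dist_pos.
  assert (HFX : FX <= D + b) by apply dist_tri.
  assert (Hd_le : d <= X + a).
  { unfold d, X, a; rewrite (dist_sym M y oM); apply dist_tri. }
  assert (Hd_pos : 0 < d).
  { destruct (dist_pos M x y) as [Hp | Hp]; [exact Hp |].
    exfalso; apply (dist_neq M oM x y); [| exact (proj1 (dist_refl M x y) Hp)].
    fold a X.
    assert (1 <= K) by (pose proof (Rdiv_lt_0_compat 2 e ltac:(lra) He); lra).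
    nra. }
  assert (HeK : 2 + e <= e * K).
  { replace (2 + e) with (e * (2 / e + 1)) by (field; lra).
    apply Rmult_le_compat_l; lra. }
  assert (HeX : (2 + e) * (a + b) <= e * X) by nra.
  apply Rmult_le_reg_r with d; [exact Hd_pos |].
  replace (D / d * d) with D by (field; lra).
  nra.
Qed.

Lemma not_radially_flat_escape (M N : Metric_Space) (oM : Base M)
  (oN : Base N) (f : Base M -> Base N) :
  ~ radially_flat M N oM oN f ->
  exists e, 0 < e /\ exists g : R -> Base M, forall r,
    r < dist M (g r) oM /\ e * dist M (g r) oM <= dist N (f (g r)) oN.
Proof.
  intros Hnf.
  apply not_all_ex_not in Hnf as [e He].
  apply imply_to_and in He as [He Hnot].
  exists e; split; [lra |].
  apply (choice (fun r x =>
    r < dist M x oM /\ e * dist M x oM <= dist N (f x) oN)); intro r.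
  apply not_ex_all_not with (n := Rmax r 0) in Hnot.
  apply not_all_ex_not in Hnot as [x Hx].
  apply imply_to_and in Hx as [Hfar Hratio].
  apply Rnot_lt_ge in Hratio.
  pose proof (Rmax_l r 0); pose proof (Rmax_r r 0).
  exists x; split; [lra |].
  assert (Hpos : 0 < dist M x oM) by lra.
  rewrite Rabs_right in Hratio by
    (apply Rle_ge, Rdiv_le_0_compat; [apply Rge_le, dist_pos | exact Hpos]).
  apply Rge_le in Hratio.
  replace (dist N (f x) oN) with (dist N (f x) oN / dist M x oM * dist M x oM)
    by (field; lra).
  apply Rmult_le_compat_r; lra.
Qed.

Section EscapeSequence.

Variables (M N : Metric_Space) (oM : Base M) (oN : Base N).
Variables (f : Base M -> Base N) (e : R) (g : R -> Base M).
Hypothesis e_pos : 0 < e.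
Hypothesis g_escape : forall r,
  r < dist M (g r) oM /\ e * dist M (g r) oM <= dist N (f (g r)) oN.

Fixpoint escape_seq (k : nat) : Base M :=
  match k with
  | O => g 0
  | S k => g (INR (k + 2) * (dist M (escape_seq k) oM
                              + dist N (f (escape_seq k)) oN) + INR k)
  end.

Notation s := escape_seq.

Lemma escape_seq_far (k : nat) :
  INR (k + 2) * (dist M (s k) oM + dist N (f (s k)) oN) + INR k
    < dist M (s (S k)) oM.
Proof. exact (proj1 (g_escape _)). Qed.

Lemma escape_seq_image_far (k : nat) :
  e * dist M (s k) oM <= dist N (f (s k)) oN.
Proof. destruct k; apply g_escape. Qed.

Lemma escape_seq_dist_lt (k : nat) :
  dist M (s k) oM + dist N (f (s k)) oN + INR k < dist M (s (S k)) oM.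
Proof.
  pose proof (escape_seq_far k).
  pose proof (dist_pos M (s k) oM); pose proof (dist_pos N (f (s k)) oN).
  assert (1 <= INR (k + 2)) by (apply (le_INR 1); lia).
  nra.
Qed.

Lemma escape_seq_succ_neq (k : nat) : s (S k) <> s k.
Proof.
  apply (dist_neq M oM).
  pose proof (escape_seq_dist_lt k).
  pose proof (dist_pos N (f (s k)) oN); pose proof (pos_INR k).
  lra.
Qed.

Lemma escape_seq_diverges : is_lim_seq (fun k => dist M (s k) oM) p_infty.
Proof.
  apply is_lim_seq_incr_1.
  apply is_lim_seq_le_p_loc with (u := INR); [| exact is_lim_seq_INR].
  exists O; intros k _.
  pose proof (escape_seq_dist_lt k).
  pose proof (dist_pos M (s k) oM); pose proof (dist_pos N (f (s k)) oN).
  lra.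
Qed.

Lemma escape_seq_image_diverges :
  is_lim_seq (fun k => dist N (f (s k)) oN) p_infty.
Proof.
  exact (is_lim_seq_p_infty_of_scal_le _ _ e e_pos escape_seq_image_far
           escape_seq_diverges).
Qed.

Lemma escape_seq_quotient_eventually_ge :
  eventually (fun k => e / 2 <=
    dist N (f (s (S k))) (f (s k)) / dist M (s (S k)) (s k)).
Proof.
  destruct (INR_unbounded (2 / e + 1)) as [k0 Hk0].
  exists k0; intros k Hk.
  apply (dist_quotient_ge M N oM oN f e (INR (k + 2))); trivial.
  - assert (INR k0 <= INR (k + 2)) by (apply le_INR; lia).
    lra.
  - apply escape_seq_image_far.
  - pose proof (escape_seq_far k); pose proof (pos_INR k); lra.
Qed.

End EscapeSequence.

Theorem lemma2p4 (M N : Metric_Space) (oM : Base M) (oN : Base N)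
  (f : Base M -> Base N) :
  unbounded M oM -> P3 M N oM oN f -> radially_flat M N oM oN f.
Proof.
  intros _ HP3.
  apply NNPP; intro Hnf.
  destruct (not_radially_flat_escape M N oM oN f Hnf)
    as [e [He [g Hg]]].
  set (s := escape_seq M N oM oN f g).
  destruct (HP3 (fun k => s (S k)) s) as [Hacc | Hliminf].
  - exact (escape_seq_succ_neq M N oM oN f e g Hg).
  - exact (proj1 (is_lim_seq_incr_1 _ _)
             (escape_seq_diverges M N oM oN f e g Hg)).
  - exact (escape_seq_diverges M N oM oN f e g Hg).
  - revert Hacc; apply (no_accumulation_point2_of_diverging N oN).
    exact (proj1 (is_lim_seq_incr_1 _ _)
             (escape_seq_image_diverges M N oM oN f e g He Hg)).
  - exact (LimInf_seq_neq_0_of_eventually_ge _ (e / 2) ltac:(lra)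
             (escape_seq_quotient_eventually_ge M N oM oN f e g He Hg)
             Hliminf).
Qed.
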